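(* The elements $\delta_{2n}=\Theta(x\otimes\operatorname{ad}_y^{\,2n}(x))$, $n\ge 0$, form a basis of the subspace of $F(L)$ spanned by classes of $x$-degree $2$ (i.e. containing exactly two letters $x$).
   Context: $A=\mathbb{R}\langle x,y\rangle$; $L\subset A$ is the free Lie algebra on $x,y$; $\operatorname{ad}_y(l)=[y,l]=yl-ly$. $F(L)$ is the quotient of $L\otimes L$ by the span of $a\otimes b-b\otimes a$ and $a\otimes[b,c]-[a,b]\otimes c$ ($a,b,c\in L$), with canonical projection $\Theta:L\otimes L\to F(L)$. $F(L)$ is graded by the number of letters $x$ and $y$. *)

From mathcomp Require Import all_boot all_order all_algebra.
From mathcomp Require Import reals.
Set Implicit Arguments. Unset Strict Implicit. Unset Printing Implicit Defensive.
Import GRing.Theory Num.Theory.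
Local Open Scope ring_scope.

(* Words over the alphabet {x,y}: [false] encodes the letter x, [true] the letter y. *)
Definition word := seq bool.

Section FreeLie.
Variable R : realType.

(* A = R<x,y>, embedded in the algebra of all functions word -> R
   (noncommutative formal power series) with the Cauchy (concatenation) product. *)
Definition A := word -> R.

Definition aadd (f g : A) : A := fun w => f w + g w.
Definition ascale (c : R) (f : A) : A := fun w => c * f w.
Definition amul (f g : A) : A :=
  fun w => \sum_(i < (size w).+1) f (take i w) * g (drop i w).
Definition bracket (f g : A) : A := fun w => amul f g w - amul g f w.

Definition letter (b : bool) : A := fun w => (w == [:: b])%:R.
Definition X : A := letter false.
Definition Y : A := letter true.

(* L = the Lie subalgebra of A generated by x and y (the free Lie algebra). *)
Inductive inL : A -> Prop :=
| inL_x : inL X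
| inL_y : inL Y
| inL_add f g : inL f -> inL g -> inL (aadd f g)
| inL_scale c f : inL f -> inL (ascale c f)
| inL_bracket f g : inL f -> inL g -> inL (bracket f g).

Definition ady_pow (n : nat) (f : A) : A := iter n (bracket Y) f.

(* A (x) A embedded in functions on pairs of words; a (x) b is (u,v) |-> a u * b v.
   L (x) L is the span of the elementary tensors a (x) b with a, b in L. *)
Definition T := (word * word) -> R.
Definition tens (f g : A) : T := fun p => f p.1 * g p.2.
Definition tzero : T := fun _ => 0.
Definition tadd (s t : T) : T := fun p => s p + t p.
Definition tsub (s t : T) : T := fun p => s p - t p.
Definition tscale (c : R) (t : T) : T := fun p => c * t p.
Definition tsum (N : nat) (f : nat -> T) : T := fun p => \sum_(k < N) f k p.

Inductive span (S : T -> Prop) : T -> Prop :=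
| span0 : span S tzero
| spanS t : S t -> span S t
| span_add s t : span S s -> span S t -> span S (tadd s t)
| span_scale c t : span S t -> span S (tscale c t).

Definition elemLL (t : T) : Prop := exists a b, [/\ inL a, inL b & t = tens a b].
Definition LL : T -> Prop := span elemLL.

(* Relations defining F(L) = (L (x) L) / K. *)
Definition relF (t : T) : Prop :=
  exists a b c, [/\ inL a, inL b, inL c &
    (t = tsub (tens a b) (tens b a) \/
     t = tsub (tens a (bracket b c)) (tens (bracket a b) c))].
Definition Kker : T -> Prop := span relF.

Definition eqF (s t : T) : Prop := Kker (tsub s t).

Definition xdeg2 (t : T) : Prop :=
  forall p, t p <> 0 -> (count negb p.1 + count negb p.2)%N = 2%N.

(* representative of delta_{2n} = Theta(x (x) ad_y^{2n}(x)) *)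
Definition delta (n : nat) : T := tens X (ady_pow (2 * n) X).

End FreeLie.

(* Grade by the number of letters x.  The x-degree 0 part of a Lie element is a
   multiple of y and its x-degree 1 part a combination of the ad_y^k x, so the
   x-degree 2 part of a (x) b is a sum of terms y (x) w, w (x) y and
   ad_y^k x (x) ad_y^l x.  In F(L), moving brackets across the tensor gives
   ad_y^k x (x) ad_y^l x = (-1)^k x (x) ad_y^(k+l) x, which vanishes for k + l odd
   by symmetry, and y (x) [u, v] reduces to such terms since
   y (x) [y, w] = [y, y] (x) w = 0.  For independence, the trace form
   tr (rho a * rho b) of the representation x |-> P = [[0,1],[1,0]],
   y |-> Q = diag(1,-1) of A is symmetric and invariant, so each of its
   homogeneous components factors through F(L); since ad_Q^2 P = 4 P and
   tr (P * P) = 2, in degree 2m + 2 it takes the value 2 * 4^m on delta_(2m)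
   and vanishes on the other delta's. *)

From mathcomp Require Import all_boot all_order all_algebra.
From mathcomp Require Import reals.
From Stdlib Require Import FunctionalExtensionality.
From mathcomp Require Import zify ring.
Set Implicit Arguments. Unset Strict Implicit. Unset Printing Implicit Defensive.
Import GRing.Theory Num.Theory.
Local Open Scope ring_scope.

Lemma sum_indicator_conv (S : pzSemiRingType) (a b i : nat) (x y : S) :
  \sum_(j < i.+1) ((if a == j then x else 0) * (if b == (i - j)%N then y else 0))
  = if (a + b == i)%N then x * y else 0.
Proof.
rewrite (eq_bigr (fun j : 'I_i.+1 => if j == a :> nat then
    (if b == (i - j)%N then x * y else 0) else 0)); last first.
  by move=> j _; rewrite eq_sym; do 2 case: ifP; rewrite ?mul0r ?mulr0 ?mulr1.
rewrite -big_mkcond (big_ord1_eq _ (fun j => if b == (i - j)%N then x * y else 0)) ltnS.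
by case: leqP => ha; do ?case: eqP => //=; lia.
Qed.

Lemma sum_indicatorZ (S : pzRingType) (V : lmodType S) a d (F : nat -> V) :
  \sum_(i < d.+1) ((i == a :> nat)%:R *: F i) = if (a <= d)%N then F a else 0.
Proof.
rewrite (eq_bigr (fun i : 'I_d.+1 => if i == a :> nat then F i else 0)); last first.
  by move=> i _; case: ifP; rewrite ?scale1r ?scale0r.
by rewrite -big_mkcond big_ord1_eq ltnS.
Qed.

Section PolyCoef.
Variable S : nzRingType.
Implicit Types p q r : {poly S}.

Lemma coefM_agree_r p q r n : (forall j, (j <= n)%N -> p`_j = q`_j) ->
  (r * p)`_n = (r * q)`_n.
Proof. by move=> pq; rewrite !coefM; apply: eq_bigr => j _; rewrite pq // leq_subr. Qed.

Lemma coefM_agree_l p q r n : (forall j, (j <= n)%N -> p`_j = q`_j) ->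
  (p * r)`_n = (q * r)`_n.
Proof. by move=> pq; rewrite !coefM; apply: eq_bigr => j _; rewrite pq // -ltnS. Qed.

End PolyCoef.

Lemma mxtrace_coefMC (S : comNzRingType) m (p q : {poly 'M[S]_m.+1}) n :
  \tr ((p * q)`_n) = \tr ((q * p)`_n).
Proof.
rewrite !coefM !raddf_sum /= (reindex_inj rev_ord_inj) /=; apply: eq_bigr => j _.
by rewrite subSS subKn 1?mxtrace_mulC // -ltnS.
Qed.

Lemma count_negb_take_drop (w : word) k :
  count negb w = (count negb (take k w) + count negb (drop k w))%N.
Proof. by rewrite -count_cat cat_take_drop. Qed.

Fixpoint words (n : nat) : seq word :=
  if n is n'.+1 then [seq false :: w | w <- words n'] ++ [seq true :: w | w <- words n']
  else [:: [::]].

Lemma size_mem_words n w : w \in words n -> size w = n.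
Proof.
elim: n w => [|n IH] w /=; first by rewrite inE => /eqP ->.
by rewrite mem_cat => /orP [] /mapP [z /IH z_n ->] /=; rewrite z_n.
Qed.

Lemma words_split (V : nmodType) i j (G : word -> word -> V) :
  \sum_(w <- words (i + j)) G (take i w) (drop i w) =
  \sum_(y <- words i) \sum_(z <- words j) G y z.
Proof.
elim: i G => [|i IH] G.
  by rewrite add0n big_cons big_nil addr0; apply: eq_bigr => w _; rewrite take0 drop0.
rewrite addSn /= !big_cat !big_map /=.
by rewrite (IH (fun y z => G (false :: y) z)) (IH (fun y z => G (true :: y) z)).
Qed.

Section FreeLieTrace.
Variable R : realType.

Local Notation A := (A R).
Local Notation T := (T R).
Local Notation X := (X R).
Local Notation Y := (Y R).

Implicit Types (f g h : A) (s t u : T).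

(** * Homogeneous components in x *)

Definition azero : A := fun _ => 0.
Definition asum (n : nat) (F : nat -> A) : A := fun w => \sum_(k < n) F k w.

Definition xpart (i : nat) f : A := fun w => if count negb w == i then f w else 0.

Lemma xpart_amul i f g :
  xpart i (amul f g) = asum i.+1 (fun j => amul (xpart j f) (xpart (i - j) g)).
Proof.
apply: functional_extensionality => w; rewrite /xpart /asum /amul exchange_big /=.
case: ifP => w_i; [apply: eq_bigr | rewrite big1 //] => k _;
  by rewrite sum_indicator_conv -count_negb_take_drop w_i.
Qed.

Lemma xpart_amul_rev i f g :
  xpart i (amul f g) = asum i.+1 (fun j => amul (xpart (i - j) f) (xpart j g)).
Proof.
rewrite xpart_amul; apply: functional_extensionality => w.
rewrite /asum (reindex_inj rev_ord_inj); apply: eq_bigr => j _ /=.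
by rewrite subSS subKn // -ltnS.
Qed.

Lemma xpart_bracket i f g :
  xpart i (bracket f g) = asum i.+1 (fun j => bracket (xpart j f) (xpart (i - j) g)).
Proof.
have -> : xpart i (bracket f g) = fun w => xpart i (amul f g) w - xpart i (amul g f) w.
  by apply: functional_extensionality => w; rewrite /xpart /bracket; case: ifP; rewrite ?subr0.
rewrite xpart_amul xpart_amul_rev; apply: functional_extensionality => w.
by rewrite /asum /bracket -sumrB.
Qed.

Lemma xpart_letter i b :
  xpart i (letter R b) = if i == nat_of_bool (~~ b) then letter R b else azero.
Proof.
apply: functional_extensionality => w; rewrite /xpart /letter /azero.
case: (w =P [:: b]) => [->|/eqP/negbTE hw] /=.
  by rewrite addn0 eq_sym; case: ifP; rewrite ?eqxx.
by do 2 case: ifP; rewrite ?hw.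
Qed.

Lemma xpart_add i f g : xpart i (aadd f g) = aadd (xpart i f) (xpart i g).
Proof.
by apply: functional_extensionality => w; rewrite /xpart /aadd; case: ifP; rewrite ?addr0.
Qed.

Lemma xpart_scale i c f : xpart i (ascale c f) = ascale c (xpart i f).
Proof.
by apply: functional_extensionality => w; rewrite /xpart /ascale; case: ifP; rewrite ?mulr0.
Qed.

Lemma amulZl c f g : amul (ascale c f) g = ascale c (amul f g).
Proof.
apply: functional_extensionality => w; rewrite /amul /ascale mulr_sumr.
by apply: eq_bigr => k _; rewrite mulrA.
Qed.

Lemma amulZr c f g : amul f (ascale c g) = ascale c (amul f g).
Proof.
apply: functional_extensionality => w; rewrite /amul /ascale mulr_sumr.
by apply: eq_bigr => k _; rewrite mulrCA.
Qed.

Lemma bracketZl c f g : bracket (ascale c f) g = ascale c (bracket f g).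
Proof.
by apply: functional_extensionality => w; rewrite /bracket amulZl amulZr /ascale mulrBr.
Qed.

Lemma bracketZr c f g : bracket f (ascale c g) = ascale c (bracket f g).
Proof.
by apply: functional_extensionality => w; rewrite /bracket amulZl amulZr /ascale mulrBr.
Qed.

Lemma bracket_antisym f g : bracket g f = ascale (-1) (bracket f g).
Proof.
by apply: functional_extensionality => w; rewrite /bracket /ascale mulN1r opprB.
Qed.

Lemma bracket_self f : bracket f f = azero.
Proof. by apply: functional_extensionality => w; rewrite /bracket subrr. Qed.

Lemma bracket_sumr f n F : bracket f (asum n F) = asum n (fun k => bracket f (F k)).
Proof.
apply: functional_extensionality => w; rewrite /bracket /asum /amul sumrB.
congr (_ - _); rewrite exchange_big /=; apply: eq_bigr => i _.
  by rewrite mulr_sumr.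
by rewrite mulr_suml.
Qed.

Lemma ascale0r f : ascale 0 f = azero.
Proof. by apply: functional_extensionality => w; rewrite /ascale mul0r. Qed.

Lemma ascaler0 c : ascale c azero = azero.
Proof. by apply: functional_extensionality => w; rewrite /ascale mulr0. Qed.

Lemma ascale1r f : ascale 1 f = f.
Proof. by apply: functional_extensionality => w; rewrite /ascale mul1r. Qed.

Lemma ascaleA c d f : ascale c (ascale d f) = ascale (c * d) f.
Proof. by apply: functional_extensionality => w; rewrite /ascale mulrA. Qed.

Lemma ascaleDl c d f : ascale (c + d) f = aadd (ascale c f) (ascale d f).
Proof. by apply: functional_extensionality => w; rewrite /ascale /aadd mulrDl. Qed.

Lemma asum1 F : asum 1 F = F 0%N.
Proof. by apply: functional_extensionality => w; rewrite /asum big_ord1. Qed.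

Lemma asum2 F : asum 2 F = aadd (F 0%N) (F 1%N).
Proof. by apply: functional_extensionality => w; rewrite /asum big_ord_recr big_ord1. Qed.

Lemma asum3 F : asum 3 F = aadd (aadd (F 0%N) (F 1%N)) (F 2%N).
Proof.
by apply: functional_extensionality => w; rewrite /asum !big_ord_recr big_ord0 /= add0r.
Qed.

Lemma inL0 : inL azero.
Proof. by rewrite -(ascale0r X); apply/inL_scale/inL_x. Qed.

Lemma inL_asum n F : (forall k, (k < n)%N -> inL (F k)) -> inL (asum n F).
Proof.
elim: n => [|n IH] inF.
  have -> : asum 0 F = azero.
    by apply: functional_extensionality => w; rewrite /asum big_ord0.
  exact: inL0.
have -> : asum n.+1 F = aadd (asum n F) (F n).
  by apply: functional_extensionality => w; rewrite /asum /aadd big_ord_recr.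
by apply: inL_add; [apply: IH => k /ltnW/inF | exact: inF].
Qed.

Lemma inL_xpart i f : inL f -> inL (xpart i f).
Proof.
move=> inf; elim: inf i => {f}.
- by move=> i; rewrite xpart_letter; case: ifP => _; [exact: inL_x | exact: inL0].
- by move=> i; rewrite xpart_letter; case: ifP => _; [exact: inL_y | exact: inL0].
- by move=> f g _ IHf _ IHg i; rewrite xpart_add; apply: inL_add.
- by move=> c f _ IHf i; rewrite xpart_scale; apply: inL_scale.
- by move=> f g _ IHf _ IHg i; rewrite xpart_bracket; apply: inL_asum => k _; apply: inL_bracket.
Qed.

Lemma inL_ady_X k : inL (ady_pow k X).
Proof. by elim: k => [|k IH]; [exact: inL_x | apply/inL_bracket/IH/inL_y]. Qed.

Definition ady_comb (K : nat) (c : nat -> R) : A :=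
  asum K (fun k => ascale (c k) (ady_pow k X)).

Lemma ady_comb_widen K K' c : (K <= K')%N ->
  ady_comb K c = ady_comb K' (fun k => if (k < K)%N then c k else 0).
Proof.
move=> leKK'; apply: functional_extensionality => w; rewrite /ady_comb /asum /ascale.
rewrite (big_ord_widen _ (fun k => c k * ady_pow k X w) leKK') big_mkcond /=.
by apply: eq_bigr => k _; case: ifP; rewrite ?mul0r.
Qed.

Lemma ady_comb_add K K' c c' : aadd (ady_comb K c) (ady_comb K' c') =
  ady_comb (K + K') (fun k => (if (k < K)%N then c k else 0) + (if (k < K')%N then c' k else 0)).
Proof.
rewrite (ady_comb_widen c (leq_addr K' K)) (ady_comb_widen c' (leq_addl K K')).
apply: functional_extensionality => w; rewrite /ady_comb /asum /aadd /ascale -big_split /=.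
by apply: eq_bigr => k _; rewrite mulrDl.
Qed.

Lemma ady_comb_scale e K c : ascale e (ady_comb K c) = ady_comb K (fun k => e * c k).
Proof.
apply: functional_extensionality => w; rewrite /ady_comb /asum /ascale mulr_sumr.
by apply: eq_bigr => k _; rewrite mulrA.
Qed.

Lemma bracket_Y_ady_comb K c :
  bracket Y (ady_comb K c) = ady_comb K.+1 (fun k => if k is k'.+1 then c k' else 0).
Proof.
rewrite /ady_comb bracket_sumr; apply: functional_extensionality => w.
rewrite /asum big_ord_recl /= /ascale mul0r add0r; apply: eq_bigr => k _.
by rewrite bracketZr.
Qed.

Lemma xpart0_inL f : inL f -> exists c, xpart 0 f = ascale c Y.
Proof.
elim => {f}.
- by exists 0; rewrite xpart_letter ascale0r.
- by exists 1; rewrite xpart_letter ascale1r.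
- move=> f g _ [c fc] _ [d gd]; exists (c + d).
  by rewrite xpart_add fc gd -ascaleDl.
- by move=> e f _ [c fc]; exists (e * c); rewrite xpart_scale fc ascaleA.
- move=> f g _ [c fc] _ [d gd]; exists 0.
  rewrite xpart_bracket asum1 fc gd bracketZl bracketZr bracket_self.
  by rewrite !ascaler0 ascale0r.
Qed.

Lemma xpart1_inL f : inL f -> exists K c, xpart 1 f = ady_comb K c.
Proof.
elim => {f}.
- by exists 1%N, (fun _ => 1); rewrite xpart_letter /ady_comb asum1 ascale1r.
- exists 0%N, (fun _ => 0); rewrite xpart_letter /=.
  by apply: functional_extensionality => w; rewrite /ady_comb /asum big_ord0.
- move=> f g _ [K [c fc]] _ [K' [c' gc']].
  by do 2 eexists; rewrite xpart_add fc gc' ady_comb_add.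
- by move=> e f _ [K [c fc]]; do 2 eexists; rewrite xpart_scale fc ady_comb_scale.
- move=> f g inf [K [c fc]] ing [K' [c' gc']].
  have [a fa] := xpart0_inL inf; have [b gb] := xpart0_inL ing.
  rewrite xpart_bracket asum2 /= fa gb fc gc' bracketZl bracketZr.
  rewrite (bracket_antisym _ (ady_comb K c)).
  by rewrite ascaleA !bracket_Y_ady_comb !ady_comb_scale ady_comb_add; do 2 eexists.
Qed.

(** * The relations of F(L) *)

Local Notation tzero := (tzero R).

Lemma tens_addr f g h : tens f (aadd g h) = tadd (tens f g) (tens f h).
Proof. by apply: functional_extensionality => p; rewrite /tens /tadd /aadd mulrDr. Qed.

Lemma tens_scalel c f g : tens (ascale c f) g = tscale c (tens f g).
Proof. by apply: functional_extensionality => p; rewrite /tens /tscale /ascale mulrA. Qed.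

Lemma tens_scaler c f g : tens f (ascale c g) = tscale c (tens f g).
Proof. by apply: functional_extensionality => p; rewrite /tens /tscale /ascale mulrCA. Qed.

Lemma tens0l f : tens azero f = tzero.
Proof. by apply: functional_extensionality => p; rewrite /tens /azero mul0r. Qed.

Lemma tens0r f : tens f azero = tzero.
Proof. by apply: functional_extensionality => p; rewrite /tens /azero mulr0. Qed.

Lemma tens_suml n F g : tens (asum n F) g = tsum n (fun k => tens (F k) g).
Proof. by apply: functional_extensionality => p; rewrite /tens /tsum /asum mulr_suml. Qed.

Lemma tens_sumr f n F : tens f (asum n F) = tsum n (fun k => tens f (F k)).
Proof. by apply: functional_extensionality => p; rewrite /tens /tsum /asum mulr_sumr. Qed.

Lemma tsum0 (F : nat -> T) : tsum 0 F = tzero.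
Proof. by apply: functional_extensionality => p; rewrite /tsum big_ord0. Qed.

Lemma tsumS N (F : nat -> T) : tsum N.+1 F = tadd (tsum N F) (F N).
Proof. by apply: functional_extensionality => p; rewrite /tsum /tadd big_ord_recr. Qed.

Lemma tscaleA c d t : tscale c (tscale d t) = tscale (c * d) t.
Proof. by apply: functional_extensionality => p; rewrite /tscale mulrA. Qed.

Lemma tscale1 t : tscale 1 t = t.
Proof. by apply: functional_extensionality => p; rewrite /tscale mul1r. Qed.

Lemma Kker_scale_inv c t : c != 0 -> Kker (tscale c t) -> Kker t.
Proof.
move=> c_neq0 /(span_scale c^-1); congr Kker.
by apply: functional_extensionality => p; rewrite /tscale mulrA mulVf ?mul1r.
Qed.

Lemma eqF_eq s t : s = t -> eqF s t.
Proof.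
move=> ->; rewrite /eqF; have -> : tsub t t = tzero.
  by apply: functional_extensionality => p; rewrite /tsub subrr.
exact: span0.
Qed.

Lemma eqF_sym s t : eqF s t -> eqF t s.
Proof.
rewrite /eqF => /(span_scale (-1)); congr Kker.
by apply: functional_extensionality => p; rewrite /tsub /tscale mulN1r opprB.
Qed.

Lemma eqF_trans s t u : eqF s t -> eqF t u -> eqF s u.
Proof.
rewrite /eqF => st tu; have -> : tsub s u = tadd (tsub s t) (tsub t u).
  by apply: functional_extensionality => p; rewrite /tsub /tadd addrA subrK.
exact: span_add.
Qed.

Lemma eqF_add s1 s2 t1 t2 : eqF s1 t1 -> eqF s2 t2 -> eqF (tadd s1 s2) (tadd t1 t2).
Proof.
rewrite /eqF => st1 st2.
have -> : tsub (tadd s1 s2) (tadd t1 t2) = tadd (tsub s1 t1) (tsub s2 t2).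
  by apply: functional_extensionality => p; rewrite /tsub /tadd opprD addrACA.
exact: span_add.
Qed.

Lemma eqF_scale c s t : eqF s t -> eqF (tscale c s) (tscale c t).
Proof.
rewrite /eqF => /(span_scale c); congr Kker.
by apply: functional_extensionality => p; rewrite /tsub /tscale mulrBr.
Qed.

Lemma eqF_tensC f g : inL f -> inL g -> eqF (tens f g) (tens g f).
Proof. by move=> inf ing; apply: spanS; exists f, g, f; split => //; left. Qed.

Lemma eqF_tens_bracket f g h : inL f -> inL g -> inL h ->
  eqF (tens f (bracket g h)) (tens (bracket f g) h).
Proof. by move=> inf ing inh; apply: spanS; exists f, g, h; split => //; right. Qed.

Lemma ady_X_supp k w : count negb w != 1%N -> ady_pow k X w = 0.
Proof.
elim: k w => [|k IH] w w_cnt /=.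
  by rewrite /X /letter; case: (w =P [:: false]) w_cnt => [->|].
rewrite /bracket /amul !big1 ?subrr // => i _; rewrite /Y /letter.
  case: (drop i w =P [:: true]) => [w_i|]; last by rewrite mulr0.
  by rewrite IH ?mul0r //; move: w_cnt; rewrite (count_negb_take_drop w i) w_i addn0.
case: (take i w =P [:: true]) => [w_i|]; last by rewrite mul0r.
by rewrite IH ?mulr0 //; move: w_cnt; rewrite (count_negb_take_drop w i) w_i.
Qed.

Lemma LL_delta n : LL (delta R n).
Proof.
by apply: spanS; exists X, (ady_pow (2 * n) X); split => //; [exact: inL_x | exact: inL_ady_X].
Qed.

Lemma xdeg2_delta n : xdeg2 (delta R n).
Proof.
move=> [u v]; rewrite /delta /tens /= => /eqP; rewrite mulf_eq0 negb_or => /andP[Xu adyv].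
have -> : count negb v = 1%N by apply/eqP; apply: contraNT adyv => /ady_X_supp ->.
by move: Xu; rewrite /X /letter; case: (u =P [:: false]) => [->|]; rewrite ?eqxx.
Qed.

(** * Spanning *)

Definition delta_comb (N : nat) (c : nat -> R) : T :=
  tsum N (fun k => tscale (c k) (delta R k)).

Definition in_delta_span t : Prop := exists N c, eqF t (delta_comb N c).

Lemma in_delta_span_eqF s t : eqF s t -> in_delta_span t -> in_delta_span s.
Proof. by move=> st [N [c tc]]; exists N, c; apply: eqF_trans st tc. Qed.

Lemma in_delta_span0 : in_delta_span tzero.
Proof. by exists 0%N, (fun _ => 0); rewrite /delta_comb tsum0; apply: eqF_eq. Qed.

Lemma in_delta_span_delta n : in_delta_span (delta R n).
Proof.
exists n.+1, (fun k => (k == n)%:R); apply: eqF_eq.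
apply: functional_extensionality => p; rewrite /delta_comb /tsum /tscale big_ord_recr /=.
by rewrite eqxx mul1r big1 ?add0r // => k _; rewrite (ltn_eqF (ltn_ord k)) mul0r.
Qed.

Lemma delta_comb_widen N N' c : (N <= N')%N ->
  delta_comb N c = delta_comb N' (fun k => if (k < N)%N then c k else 0).
Proof.
move=> leNN'; apply: functional_extensionality => p; rewrite /delta_comb /tsum /tscale.
rewrite (big_ord_widen _ (fun k => c k * delta R k p) leNN') big_mkcond /=.
by apply: eq_bigr => k _; case: ifP; rewrite ?mul0r.
Qed.

Lemma in_delta_span_add s t : in_delta_span s -> in_delta_span t -> in_delta_span (tadd s t).
Proof.
move=> [N [c sc]] [N' [c' tc']].
exists (N + N')%N, (fun k => (if (k < N)%N then c k else 0) + (if (k < N')%N then c' k else 0)).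
apply: eqF_trans (eqF_add sc tc') _; apply: eqF_eq.
rewrite (delta_comb_widen c (leq_addr N' N)) (delta_comb_widen c' (leq_addl N N')).
apply: functional_extensionality => p; rewrite /delta_comb /tsum /tadd /tscale -big_split /=.
by apply: eq_bigr => k _; rewrite mulrDl.
Qed.

Lemma in_delta_span_scale e t : in_delta_span t -> in_delta_span (tscale e t).
Proof.
move=> [N [c tc]]; exists N, (fun k => e * c k).
apply: eqF_trans (eqF_scale e tc) _; apply: eqF_eq.
apply: functional_extensionality => p; rewrite /delta_comb /tsum /tscale mulr_sumr.
by apply: eq_bigr => k _; rewrite mulrA.
Qed.

Lemma in_delta_span_tsum n (F : nat -> T) :
  (forall k, (k < n)%N -> in_delta_span (F k)) -> in_delta_span (tsum n F).
Proof.
elim: n => [|n IH] inF; first by rewrite tsum0; apply: in_delta_span0.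
by rewrite tsumS; apply: in_delta_span_add; [apply: IH => k /ltnW/inF | exact: inF].
Qed.

Lemma eqF_tens_ady k l : eqF (tens (ady_pow k X) (ady_pow l X))
                              (tscale ((-1) ^+ k) (tens X (ady_pow (k + l) X))).
Proof.
elim: k l => [|k IH] l; first by rewrite expr0 tscale1; apply: eqF_eq.
rewrite [ady_pow k.+1 X]/= bracket_antisym tens_scalel.
have := eqF_tens_bracket (inL_ady_X k) (inL_y R) (inL_ady_X l).
move/eqF_sym/(eqF_scale (-1))/eqF_trans; apply.
apply: eqF_trans (eqF_scale _ (IH l.+1)) _.
by rewrite tscaleA -exprS addnS; apply: eqF_eq.
Qed.

(* For [m] odd, symmetry and [eqF_tens_ady] identify [x (x) ad_y^m x] with its opposite. *)
Lemma in_delta_span_tens_X_ady m : in_delta_span (tens X (ady_pow m X)).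
Proof.
have [m_odd|m_even] := boolP (odd m); last first.
  by rewrite -[m]odd_double_half (negbTE m_even) add0n -mul2n; apply: in_delta_span_delta.
apply: (in_delta_span_eqF _ in_delta_span0); rewrite /eqF.
apply: (@Kker_scale_inv 2); first by rewrite pnatr_eq0.
have := eqF_trans (eqF_tensC (inL_x R) (inL_ady_X m)) (eqF_tens_ady m 0).
rewrite addn0 -signr_odd m_odd expr1; congr Kker.
apply: functional_extensionality => p; rewrite /tscale /tsub /tzero.
by rewrite subr0 mulN1r opprK mulr2n mulrDl mul1r.
Qed.

Lemma in_delta_span_tens_ady_comb K c K' c' :
  in_delta_span (tens (ady_comb K c) (ady_comb K' c')).
Proof.
rewrite /ady_comb tens_suml; apply: in_delta_span_tsum => k _.
rewrite tens_scalel tens_sumr; apply/in_delta_span_scale/in_delta_span_tsum => l _.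
rewrite tens_scaler; apply: in_delta_span_scale.
apply: in_delta_span_eqF (eqF_tens_ady k l) _.
exact/in_delta_span_scale/in_delta_span_tens_X_ady.
Qed.

Lemma eqF_tens_Y_bracket_Y f : inL f -> eqF (tens Y (bracket Y f)) tzero.
Proof.
move=> inf; apply: eqF_trans (eqF_tens_bracket (inL_y R) (inL_y R) inf) _.
by rewrite bracket_self tens0l; apply: eqF_eq.
Qed.

Lemma in_delta_span_tens_Y_xpart2 f : inL f -> in_delta_span (tens Y (xpart 2 f)).
Proof.
elim => {f}.
- by rewrite xpart_letter tens0r; apply: in_delta_span0.
- by rewrite xpart_letter tens0r; apply: in_delta_span0.
- by move=> f g _ IHf _ IHg; rewrite xpart_add tens_addr; apply: in_delta_span_add.
- by move=> e f _ IHf; rewrite xpart_scale tens_scaler; apply: in_delta_span_scale.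
- move=> f g inf _ ing _.
  have [a fa] := xpart0_inL inf; have [b gb] := xpart0_inL ing.
  have [K [c fc]] := xpart1_inL inf; have [K' [c' gc']] := xpart1_inL ing.
  rewrite xpart_bracket asum3 subn0 subnn (_ : 2 - 1 = 1)%N // 2!tens_addr.
  apply: in_delta_span_add; first apply: in_delta_span_add.
  + rewrite fa bracketZl tens_scaler; apply: in_delta_span_scale.
    exact: in_delta_span_eqF (eqF_tens_Y_bracket_Y (inL_xpart 2 ing)) in_delta_span0.
  + have := eqF_tens_bracket (inL_y R) (inL_xpart 1 inf) (inL_xpart 1 ing).
    move/in_delta_span_eqF; apply.
    by rewrite fc gc' bracket_Y_ady_comb; apply: in_delta_span_tens_ady_comb.
  + rewrite gb bracketZr bracket_antisym !tens_scaler.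
    apply/in_delta_span_scale/in_delta_span_scale.
    exact: in_delta_span_eqF (eqF_tens_Y_bracket_Y (inL_xpart 2 inf)) in_delta_span0.
Qed.

Definition xdeg2_part t : T := fun p =>
  if (count negb p.1 + count negb p.2 == 2)%N then t p else 0.

Lemma xdeg2_part_tens f g : xdeg2_part (tens f g) =
  tadd (tadd (tens (xpart 0 f) (xpart 2 g)) (tens (xpart 1 f) (xpart 1 g)))
       (tens (xpart 2 f) (xpart 0 g)).
Proof.
apply: functional_extensionality => p; rewrite /xdeg2_part /tens /tadd /xpart.
case: (count negb p.1) => [|[|[|i]]]; case: (count negb p.2) => [|[|[|j]]];
  by rewrite ?addSn ?addnS ?add0n ?addn0 /= ?mul0r ?mulr0 ?addr0 ?add0r.
Qed.

Lemma xdeg2_part_id t : xdeg2 t -> xdeg2_part t = t.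
Proof.
move=> deg2; apply: functional_extensionality => p; rewrite /xdeg2_part.
by case: eqP => // p_deg; case: (t p =P 0) => // /deg2.
Qed.

Lemma in_delta_span_xdeg2_part_tens f g : inL f -> inL g ->
  in_delta_span (xdeg2_part (tens f g)).
Proof.
move=> inf ing; have [a fa] := xpart0_inL inf; have [b gb] := xpart0_inL ing.
have [K [c fc]] := xpart1_inL inf; have [K' [c' gc']] := xpart1_inL ing.
rewrite xdeg2_part_tens; apply: in_delta_span_add; first apply: in_delta_span_add.
- by rewrite fa tens_scalel; apply/in_delta_span_scale/in_delta_span_tens_Y_xpart2.
- by rewrite fc gc'; apply: in_delta_span_tens_ady_comb.
- apply: in_delta_span_eqF (eqF_tensC (inL_xpart 2 inf) (inL_xpart 0 ing)) _.
  by rewrite gb tens_scalel; apply/in_delta_span_scale/in_delta_span_tens_Y_xpart2.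
Qed.

Lemma xdeg2_part0 : xdeg2_part tzero = tzero.
Proof. by apply: functional_extensionality => p; rewrite /xdeg2_part; case: ifP. Qed.

Lemma xdeg2_partD s t : xdeg2_part (tadd s t) = tadd (xdeg2_part s) (xdeg2_part t).
Proof.
by apply: functional_extensionality => p; rewrite /xdeg2_part /tadd; case: ifP; rewrite ?addr0.
Qed.

Lemma xdeg2_partZ c t : xdeg2_part (tscale c t) = tscale c (xdeg2_part t).
Proof.
by apply: functional_extensionality => p; rewrite /xdeg2_part /tscale; case: ifP; rewrite ?mulr0.
Qed.

Lemma in_delta_span_xdeg2 t : LL t -> xdeg2 t -> in_delta_span t.
Proof.
move=> inLL /xdeg2_part_id <-; elim: inLL => {t}.
- by rewrite xdeg2_part0; apply: in_delta_span0.
- by move=> t [f [g [inf ing ->]]]; apply: in_delta_span_xdeg2_part_tens.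
- by move=> s t _ IHs _ IHt; rewrite xdeg2_partD; apply: in_delta_span_add.
- by move=> c t _ IHt; rewrite xdeg2_partZ; apply: in_delta_span_scale.
Qed.

(** * Independence through an invariant trace form *)

Local Notation M2 := ('M[R]_2).

Definition Px : M2 := \matrix_(i, j) (if i == j then 0 else 1).
Definition Qy : M2 := \matrix_(i, j) (if i == j then (if i == 0 then 1 else -1) else 0).

Definition mxword (w : word) : M2 := foldr (fun b m => (if b then Qy else Px) * m) 1 w.

Lemma mxword_cat y z : mxword (y ++ z) = mxword y * mxword z.
Proof. by elim: y => [|b y IH] /=; rewrite ?mul1r // IH mulrA. Qed.

Definition rep (d : nat) f : M2 := \sum_(w <- words d) f w *: mxword w.

Lemma rep_amul d f g : rep d (amul f g) = \sum_(i < d.+1) rep i f * rep (d - i) g.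
Proof.
have -> : rep d (amul f g) = \sum_(w <- words d) \sum_(i < d.+1)
    (f (take i w) * g (drop i w)) *: (mxword (take i w) * mxword (drop i w)).
  rewrite /rep big_seq [RHS]big_seq; apply: eq_bigr => w /size_mem_words <-.
  by rewrite scaler_suml; apply: eq_bigr => i _; rewrite -mxword_cat cat_take_drop.
rewrite exchange_big /=; apply: eq_bigr => i _.
have le_id : (i <= d)%N by rewrite -ltnS.
rewrite -{1}(subnKC le_id) (words_split _ _ (fun y z => (f y * g z) *: (mxword y * mxword z))).
rewrite mulr_suml; apply: eq_bigr => y _; rewrite mulr_sumr; apply: eq_bigr => z _.
by rewrite -scalerAl -scalerAr scalerA.
Qed.

Lemma rep_bracket d f g : rep d (bracket f g) = rep d (amul f g) - rep d (amul g f).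
Proof. by rewrite /rep -sumrB; apply: eq_bigr => w _; rewrite scalerBl. Qed.

Lemma rep_letter d b : rep d (letter R b) = (d == 1%N)%:R *: (if b then Qy else Px).
Proof.
rewrite /rep /letter; case: eqP => [->|d_neq1].
  by case: b; rewrite /= !big_cons !big_nil /= ?scale1r ?scale0r ?add0r ?addr0 mulr1.
rewrite scale0r big_seq big1 // => w /size_mem_words w_d.
by case: eqP => [w_b|]; [move: w_d; rewrite w_b => /esym | rewrite scale0r].
Qed.

Definition adQ (m : M2) : M2 := Qy * m - m * Qy.

Lemma rep_ady_X d k : rep d (ady_pow k X) = (d == k.+1)%:R *: iter k adQ Px.
Proof.
elim: k d => [|k IH] d; first exact: rep_letter.
rewrite [ady_pow _ _]/= rep_bracket !rep_amul.
have -> : \sum_(i < d.+1) rep i Y * rep (d - i) (ady_pow k X) =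
          (d == k.+2)%:R *: (Qy * iter k adQ Px).
  under eq_bigr do rewrite rep_letter IH -scalerAl.
  rewrite (sum_indicatorZ _ _ (fun i => Qy * (((d - i)%N == k.+1)%:R *: iter k adQ Px))).
  by case: d => [|d]; rewrite ?scale0r //= subSS subn0 -scalerAr.
have -> : \sum_(i < d.+1) rep i (ady_pow k X) * rep (d - i) Y =
          (d == k.+2)%:R *: (iter k adQ Px * Qy).
  under eq_bigr do rewrite IH rep_letter -scalerAl.
  rewrite (sum_indicatorZ _ _ (fun i => iter k adQ Px * (((d - i)%N == 1%N)%:R *: Qy))).
  have [lt_kd|le_dk] := ltnP k d; last first.
    by rewrite (_ : (d == k.+2) = false) ?scale0r //; apply/eqP; lia.
  by rewrite -scalerAr; congr (_%:R *: _); apply/eqP; case: eqP; case: eqP; lia.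
by rewrite -scalerBr.
Qed.

Lemma adQZ (c : R) m : adQ (c *: m) = c *: adQ m.
Proof. by rewrite /adQ scalerBr -scalerAl -scalerAr. Qed.

Lemma adQ2_Px : adQ (adQ Px) = 4%:R *: Px.
Proof.
apply/matrixP => i j; rewrite /adQ.
rewrite !mxE !big_ord_recr !big_ord0 /= !mxE !big_ord_recr !big_ord0 /= !mxE.
rewrite -!(inj_eq val_inj) /=.
by case: i => [[|[|i]] ?] //; case: j => [[|[|j]] ?] //=; ring.
Qed.

Lemma iter_adQ_even n : iter (2 * n) adQ Px = 4%:R ^+ n *: Px.
Proof.
elim: n => [|n IH]; first by rewrite scale1r.
by rewrite mulnS /= IH !adQZ adQ2_Px scalerA -exprSr.
Qed.

Lemma mxtrace_Px2 : \tr (Px * Px) = 2%:R.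
Proof.
rewrite /mxtrace !big_ord_recr big_ord0 /= !mxE !big_ord_recr !big_ord0 /= !mxE.
by rewrite -!(inj_eq val_inj) /=; ring.
Qed.

Definition rep_poly n f : {poly M2} := \poly_(i < n.+1) rep i f.

Lemma coef_rep_poly n f i : (i <= n)%N -> (rep_poly n f)`_i = rep i f.
Proof. by move=> le_in; rewrite coef_poly ltnS le_in. Qed.

Lemma coefM_rep_poly n f g d : (d <= n)%N ->
  (rep_poly n f * rep_poly n g)`_d = rep d (amul f g).
Proof.
move=> le_dn; rewrite coefM rep_amul; apply: eq_bigr => j _.
have le_jn : (j <= n)%N by apply: leq_trans le_dn; rewrite -ltnS.
by rewrite !coef_rep_poly // (leq_trans (leq_subr _ _) le_dn).
Qed.

Lemma coef_rep_poly_bracket n f g j : (j <= n)%N ->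
  (rep_poly n (bracket f g))`_j = (rep_poly n f * rep_poly n g - rep_poly n g * rep_poly n f)`_j.
Proof. by move=> le_jn; rewrite coef_rep_poly // rep_bracket coefB !coefM_rep_poly. Qed.

Definition trform n t : R := \sum_(i < n.+1) \sum_(y <- words i) \sum_(z <- words (n - i))
  t (y, z) * \tr (mxword y * mxword z).

Lemma trform_tens_sum n f g :
  trform n (tens f g) = \tr (\sum_(i < n.+1) rep i f * rep (n - i) g).
Proof.
rewrite raddf_sum; apply: eq_bigr => i _ /=.
rewrite /rep mulr_suml raddf_sum; apply: eq_bigr => y _ /=.
rewrite mulr_sumr raddf_sum; apply: eq_bigr => z _ /=.
by rewrite -scalerAl -scalerAr scalerA !mxtraceZ.
Qed.

Lemma trform_tens n f g : trform n (tens f g) = \tr ((rep_poly n f * rep_poly n g)`_n).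
Proof.
rewrite trform_tens_sum coefM; congr (\tr _); apply: eq_bigr => i _.
by rewrite !coef_rep_poly ?leq_subr // -ltnS.
Qed.

Lemma trform0 n : trform n tzero = 0.
Proof.
rewrite /trform big1 // => i _; rewrite big1 // => y _; rewrite big1 // => z _.
by rewrite mul0r.
Qed.

Lemma trformD n s t : trform n (tadd s t) = trform n s + trform n t.
Proof.
rewrite /trform -big_split; apply: eq_bigr => i _; rewrite -big_split; apply: eq_bigr => y _.
by rewrite -big_split; apply: eq_bigr => z _; rewrite mulrDl.
Qed.

Lemma trformB n s t : trform n (tsub s t) = trform n s - trform n t.
Proof.
rewrite /trform -sumrB; apply: eq_bigr => i _; rewrite -sumrB; apply: eq_bigr => y _.
by rewrite -sumrB; apply: eq_bigr => z _; rewrite mulrBl.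
Qed.

Lemma trformZ n c t : trform n (tscale c t) = c * trform n t.
Proof.
rewrite /trform mulr_sumr; apply: eq_bigr => i _; rewrite mulr_sumr; apply: eq_bigr => y _.
by rewrite mulr_sumr; apply: eq_bigr => z _; rewrite mulrA.
Qed.

Lemma trform_tsum n N (F : nat -> T) : trform n (tsum N F) = \sum_(k < N) trform n (F k).
Proof.
elim: N => [|N IH]; first by rewrite tsum0 trform0 big_ord0.
by rewrite tsumS trformD IH big_ord_recr.
Qed.

(* Symmetry is the cyclicity of the trace, and invariance follows from it once the
   brackets are expanded. *)
Lemma trform_Kker n t : Kker t -> trform n t = 0.
Proof.
elim => {t} [|t [f [g [h [_ _ _ [->|->]]]]]|s t _ s0 _ t0|c t _ t0].
- exact: trform0.
- by rewrite trformB !trform_tens mxtrace_coefMC subrr.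
- rewrite trformB !trform_tens.
  rewrite (coefM_agree_r _ (coef_rep_poly_bracket g h)).
  rewrite (coefM_agree_l _ (coef_rep_poly_bracket f g)).
  rewrite mulrBr mulrBl !coefB !raddfB /= !mulrA.
  by rewrite (mxtrace_coefMC (rep_poly n f * rep_poly n h)) mulrA; ring.
- by rewrite trformD s0 t0 addr0.
- by rewrite trformZ t0 mulr0.
Qed.

Lemma trform_delta m k :
  trform (2 * m).+2 (delta R k) = (m == k)%:R * (4%:R ^+ k * 2%:R).
Proof.
rewrite /delta trform_tens_sum.
under eq_bigr do rewrite rep_letter rep_ady_X -scalerAl.
rewrite (sum_indicatorZ _ _ (fun i => Px * ((((2 * m).+2 - i)%N == (2 * k).+1)%:R *:
  iter (2 * k) adQ Px))) /= subSS subn0 eqSS eqn_pmul2l // iter_adQ_even.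
by rewrite -scalerAr !mxtraceZ -scalerAr mxtraceZ mxtrace_Px2.
Qed.

Lemma delta_comb_eqF0 N c : eqF (delta_comb N c) tzero -> forall k, (k < N)%N -> c k = 0.
Proof.
move=> comb0 k lt_kN; move: (trform_Kker (2 * k).+2 comb0).
rewrite trformB trform0 subr0 /delta_comb trform_tsum.
under eq_bigr do rewrite trformZ trform_delta.
rewrite (bigD1 (Ordinal lt_kN)) //= eqxx mul1r big1 ?addr0; last first.
  by move=> j; rewrite -(inj_eq val_inj) eq_sym => /negbTE /= ->; rewrite mul0r mulr0.
by move/eqP; rewrite !mulf_eq0 expf_eq0 !pnatr_eq0 /= andbF orbF => /eqP.
Qed.

End FreeLieTrace.

Theorem mainTheorem6 (R : realType) :
  (* each delta_{2n} is the class of an element of L (x) L of x-degree 2 *)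
  (forall n : nat, LL (delta R n) /\ xdeg2 (delta R n)) /\
  (* linear independence in F(L) *)
  (forall (N : nat) (c : nat -> R),
      eqF (tsum N (fun k => tscale (c k) (delta R k))) (tzero R) ->
      forall k : nat, (k < N)%N -> c k = 0) /\
  (* spanning: every class of x-degree 2 is a combination of the delta_{2n} *)
  (forall t : T R, LL t -> xdeg2 t ->
      exists (N : nat) (c : nat -> R),
        eqF t (tsum N (fun k => tscale (c k) (delta R k)))).
Proof.
split; first by move=> n; split; [exact: LL_delta | exact: xdeg2_delta].
split; first exact: delta_comb_eqF0.
exact: in_delta_span_xdeg2.
Qed.
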